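(* Let $m_1,m_2\in\mathcal M$. The class of functions $$\mathscr F(m_1,m_2)=\Big\{(w,y)\mapsto \frac{r_{\gamma_2(w)}(y)}{r_{\gamma_1(w)}(y)}:\ \gamma_1\in\Gamma_{m_1},\ \gamma_2\in\Gamma_{m_2}\Big\}$$ on $\mathscr W\times\mathscr Y$ is a VC-subgraph class with VC dimension at most $2|m_1\vee m_2|+1$.
   Context: $I\subset\mathbb R$ is an interval with nonempty interior; $r_\gamma(y)=\exp(u(\gamma)T(y)-A(\gamma))$ for $\gamma\in I$, $y\in\mathscr Y$, where $T$ is a real measurable function on $\mathscr Y$, $u$ is continuous strictly monotone on $I$, and $A(\gamma)=\log\int e^{u(\gamma)T}d\nu<\infty$ for a measure $\nu$ on $\mathscr Y$. $\mathcal M$ is a set of partitions of $\mathscr W$ into finitely many measurable sets; $|m|$ is the number of sets of $m$; $m_1\vee m_2=\{K_1\cap K_2: K_1\in m_1,K_2\in m_2,K_1\cap K_2\neq\emptyset\}$. For $m\in\mathcal M$, $\Gamma_m$ is a collection of functions $\mathscr W\to I$ that are constant on each set of $m$. *)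

From HB Require Import structures.
From mathcomp Require Import all_boot all_order all_algebra.
From mathcomp Require Import all_classical all_reals all_analysis.
Set Implicit Arguments. Unset Strict Implicit. Unset Printing Implicit Defensive.
Import Order.TTheory GRing.Theory Num.Theory numFieldNormedType.Exports.
Local Open Scope classical_set_scope.
Local Open Scope ring_scope.

Definition is_partition {d} {W : measurableType d} (m : set (set W)) : Prop :=
  finite_set m /\
  (forall K, m K -> measurable K /\ K !=set0) /\
  (forall K1 K2, m K1 -> m K2 -> K1 `&` K2 !=set0 -> K1 = K2) /\
  \bigcup_(K in m) K = setT.

Definition card_is {T} (m : set (set T)) (n : nat) : Prop := (m #= `I_n)%card.

Definition pjoin {T} (m1 m2 : set (set T)) : set (set T) :=
  [set K | exists K1, exists K2, [/\ m1 K1, m2 K2, K = K1 `&` K2 & K1 `&` K2 !=set0]].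

Definition const_on_blocks {T R} (m : set (set T)) (g : T -> R) : Prop :=
  forall K, m K -> forall w w', K w -> K w' -> g w = g w'.

Definition A_fun {R : realType} {d} {Y : measurableType d}
  (nu : {measure set Y -> \bar R}) (u : R -> R) (T : Y -> R) (g : R) : R :=
  ln (fine (\int[nu]_y (expR (u g * T y))%:E)%E).

Definition r_fun {R : realType} {d} {Y : measurableType d}
  (nu : {measure set Y -> \bar R}) (u : R -> R) (T : Y -> R) (g : R) (y : Y) : R :=
  expR (u g * T y - A_fun nu u T g).

(* VC theory: convention VC dimension = largest size of a shattered finite set. *)
Definition shatters {Z} (C : set (set Z)) (k : nat) (p : 'I_k -> Z) : Prop :=
  injective p /\
  forall J : {set 'I_k}, exists2 S, C S & forall i, S (p i) <-> i \in J.

Definition VC_dim_le {Z} (C : set (set Z)) (V : nat) : Prop :=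
  forall k (p : 'I_k -> Z), shatters C p -> (k <= V)%N.

Definition subgraph {X} {R : realType} (f : X -> R) : set (X * R) :=
  [set z | z.2 < f z.1].

Definition VC_subgraph_le {X} {R : realType} (F : set (X -> R)) (V : nat) : Prop :=
  VC_dim_le [set subgraph f | f in F] V.

From HB Require Import structures.
From mathcomp Require Import all_boot all_order all_algebra.
From mathcomp Require Import all_classical all_reals all_analysis.
From mathcomp Require Import ring.
Import Order.TTheory GRing.Theory Num.Theory numFieldNormedType.Exports.
Local Open Scope classical_set_scope.
Local Open Scope ring_scope.

(* Let kappa : W -> 'I_n index the blocks of m1 \/ m2.  For
   g1 in Gamma_m1, g2 in Gamma_m2 the log-ratio
     log (r_{g2(w)}(y) / r_{g1(w)}(y))
       = (u(g2 w) - u(g1 w)) T(y) + (A(g1 w) - A(g2 w))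
   depends on w only through kappa w, so it is the inner product of the
   feature vector (1[kappa w = j] T(y))_j ++ (1[kappa w = j])_j with a
   coefficient vector of length 2n.  Hence, on points (w, y, t) with t > 0,
   the subgraph {t < f(w, y)} is the open half-space
   {0 < <features, coef> - ln t} of R^(2n+1); on points with t <= 0 every
   subgraph contains the point since f > 0.
   The file first proves that the positivity sets of linear functionals on
   R^d shatter no d+1 points (a nonzero vector orthogonal to the columns of
   the d+1 feature rows forbids one sign pattern), then that a class which
   agrees with such a class off a set contained in all its members inherits
   the bound, and finally builds the block index and the feature map. *)

Lemma left_kernel_nonzero {F : fieldType} {k d : nat} (B : 'M[F]_(k, d)) :
  (d < k)%N -> exists2 c : 'rV_k, c *m B = 0 & c != 0.
Proof.
move=> ltdk; exists (nz_row (kermx B)).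
  by apply/sub_kermxP; apply: submx_trans (nz_row_sub _) _.
rewrite nz_row_eq0 kermx_eq0 /row_free; apply: contraTN ltdk => /eqP <-.
by rewrite -leqNgt rank_leq_col.
Qed.

Lemma left_kernel_pos_entry {R : realFieldType} {k d : nat} (B : 'M[R]_(k, d)) :
  (d < k)%N -> exists c : 'rV_k, exists2 j0, c *m B = 0 & 0 < c 0 j0.
Proof.
move=> /(left_kernel_nonzero B)[c cB /rV0Pn[j0 cj0]].
have [cj0_neg | cj0_pos | cj0_eq0] := ltgtP (c 0 j0) 0.
- by exists (- c), j0; rewrite ?mulNmx ?cB ?oppr0 // mxE oppr_gt0.
- by exists c, j0.
- by move: cj0; rewrite cj0_eq0 eqxx.
Qed.

(* If c B = 0 with c_j0 > 0, then B a never has the sign pattern of c: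
   otherwise c (B a) = sum_i c_i (B a)_i would be positive. *)
Lemma orthogonal_sign_pattern {R : realFieldType} {k d : nat} (B : 'M[R]_(k, d))
    (c : 'rV_k) (j0 : 'I_k) (a : 'cV_d) :
  c *m B = 0 -> 0 < c 0 j0 ->
  ~ (forall i, 0 < (B *m a) i 0 <-> 0 < c 0 i).
Proof.
move=> cB cj0 ha.
have : (c *m (B *m a)) 0 0 = 0 by rewrite mulmxA cB mul0mx mxE.
rewrite mxE (bigD1 j0) //=; apply/eqP; rewrite gt_eqF //.
apply: ltr_pwDl; first by apply: mulr_gt0 => //; apply/ha.
apply: sumr_ge0 => i _; have [ci_pos | ci_npos] := ltP 0 (c 0 i).
  by apply/mulr_ge0/ltW/ha; [exact: ltW|].
apply: mulr_le0 => //; rewrite leNgt; apply/negP => /ha.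
by rewrite ltNge ci_npos.
Qed.

Definition halfspaces {R : numDomainType} {Z : Type} {d : nat}
    (phi : Z -> 'rV[R]_d) : set (set Z) :=
  [set [set z | 0 < (phi z *m a) 0 0] | a in [set: 'cV[R]_d]].

Lemma halfspaces_VC_dim_le {R : realFieldType} {Z : Type} {d : nat}
    (phi : Z -> 'rV[R]_d) :
  VC_dim_le (halfspaces phi) d.
Proof.
move=> k p [_ shat]; rewrite leqNgt; apply/negP => ltdk.
pose B := \matrix_i phi (p i).
have Bmul (a : 'cV_d) i : (B *m a) i 0 = (phi (p i) *m a) 0 0.
  by rewrite -(rowK (fun i => phi (p i)) i) -row_mul [RHS]mxE.
have [c [j0 cB cj0_pos]] := left_kernel_pos_entry B ltdk.
have [_ [a _ <-] ha] := shat [set i : 'I_k | 0 < c 0 i]%SET.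
apply: (orthogonal_sign_pattern _ _ _ a cB cj0_pos) => i.
by rewrite Bmul; have := ha i; rewrite inE.
Qed.

(* A class C whose members all contain N, and which coincides off N with
   members of C', cannot shatter more points than C': shattered points avoid
   N (use the empty pattern), and there C and C' have the same traces. *)
Lemma VC_dim_le_off {Z : Type} {N : set Z} {C C' : set (set Z)} {V : nat} :
  (forall S, C S -> N `<=` S) ->
  (forall S, C S -> exists2 S', C' S' & forall z, ~ N z -> (S z <-> S' z)) ->
  VC_dim_le C' V -> VC_dim_le C V.
Proof.
move=> CN CC' C'V k p [pinj shat]; apply: (C'V k p); split=> // J.
have offN i : ~ N (p i).
  have [S CS hS] := shat finset.set0; move=> /(CN S CS) /hS.
  by rewrite inE.
have [S CS hS] := shat J; have [S' C'S' SS'] := CC' S CS.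
by exists S' => // i; rewrite -hS; split => /(SS' _ (offN i)).
Qed.

Lemma join_block_index {T : Type} {m1 m2 : set (set T)} {n : nat} :
  \bigcup_(K in m1) K = setT -> \bigcup_(K in m2) K = setT ->
  card_is (pjoin m1 m2) n ->
  exists kappa : T -> 'I_n, forall w w', kappa w = kappa w' ->
    (exists2 K, m1 K & K w /\ K w') /\ (exists2 K, m2 K & K w /\ K w').
Proof.
move=> cov1 cov2 /card_set_bijP[e [efun einj _]].
have block (w : T) : exists j : 'I_n, exists K1 K2,
    [/\ m1 K1, m2 K2, K1 w, K2 w & e (K1 `&` K2) = j].
  have : (\bigcup_(K in m1) K) w by rewrite cov1.
  have : (\bigcup_(K in m2) K) w by rewrite cov2.
  move=> [K2 m2K2 K2w] [K1 m1K1 K1w].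
  have joinK : pjoin m1 m2 (K1 `&` K2) by exists K1, K2; split=> //; exists w.
  by exists (Ordinal (efun _ joinK)), K1, K2.
have [kappa hkappa] := choice block; exists kappa => w w' kw.
have [K1 [K2 [m1K1 m2K2 K1w K2w eK]]] := hkappa w.
have [K1' [K2' [m1K1' m2K2' K1w' K2w' eK']]] := hkappa w'.
have sameK : K1 `&` K2 = K1' `&` K2'.
  apply: einj; rewrite ?inE ?eK ?eK' ?kw //.
  - by exists K1, K2; split=> //; exists w.
  - by exists K1', K2'; split=> //; exists w'.
have [K1w'' K2w''] : (K1 `&` K2) w' by rewrite sameK.
by split; [exists K1 | exists K2].
Qed.

Lemma factor_through {A C : Type} {B : pointedType} (kappa : A -> C) (f : A -> B) :
  (forall a a', kappa a = kappa a' -> f a = f a') ->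
  exists h : C -> B, forall a, f a = h (kappa a).
Proof.
move=> fk; exists (fun c => if pselect (exists a, kappa a = c) is left e
  then f (sval (cid e)) else point) => a.
case: pselect => [e | []]; last by exists a.
by apply: fk; rewrite (svalP (cid e)).
Qed.

Lemma const_on_blocks_fibres {T C B : Type} (m : set (set T)) (g : T -> B)
    (kappa : T -> C) :
  const_on_blocks m g ->
  (forall w w', kappa w = kappa w' -> exists2 K, m K & K w /\ K w') ->
  forall w w', kappa w = kappa w' -> g w = g w'.
Proof. by move=> constg blocks w w' /blocks[K mK [Kw Kw']]; exact: constg Kw Kw'. Qed.

Section LogLikelihoodRatioFeatures.
Context {R : realType} {W Y : Type} {n : nat} (kappa : W -> 'I_n) (T : Y -> R).

Definition indicator_row (j0 : 'I_n) (x : R) : 'rV_n := \row_j ((j0 == j)%:R * x).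

Lemma indicator_row_mul (j0 : 'I_n) (x : R) (v : 'I_n -> R) :
  indicator_row j0 x *m \col_j v j = (x * v j0)%:M.
Proof.
apply/matrixP => i k; rewrite !ord1 !mxE (bigD1 j0) //= big1 => [|j /negbTE j0j].
  by rewrite !mxE eqxx mul1r addr0 mulr1n.
by rewrite !mxE eq_sym j0j mul0r mul0r.
Qed.

Definition loglik_features (z : (W * Y) * R) : 'rV_(n + n + 1) :=
  row_mx (row_mx (indicator_row (kappa z.1.1) (T z.1.2))
                 (indicator_row (kappa z.1.1) 1))
         (\row_(j < 1) - ln z.2).

(* Coefficients al ++ be ++ 1, with al, be the blockwise values of
   u(g2) - u(g1) and A(g1) - A(g2). *)
Definition loglik_coef (al be : 'I_n -> R) : 'cV_(n + n + 1) :=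
  col_mx (col_mx (\col_j al j) (\col_j be j)) (\col_(j < 1) 1).

Lemma loglik_features_mul (al be : 'I_n -> R) (z : (W * Y) * R) :
  (loglik_features z *m loglik_coef al be) 0 0
  = al (kappa z.1.1) * T z.1.2 + be (kappa z.1.1) - ln z.2.
Proof.
rewrite !mul_row_col !(indicator_row_mul (kappa z.1.1)) !mxE big_ord1 !mxE.
by rewrite !mulr1n mul1r mulr1 mulrC.
Qed.

End LogLikelihoodRatioFeatures.

Lemma lt_expR_ratio (R : realType) (t x y : R) :
  0 < t -> (t < expR x / expR y) = (0 < x - y - ln t).
Proof.
by move=> t_gt0; rewrite -expRB -{1}(lnK t_gt0) ltr_expR subr_gt0.
Qed.

Theorem mainTheorem3 (R : realType) (dW dY : measure_display)
  (W : measurableType dW) (Y : measurableType dY)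
  (I : set R) (u : R -> R) (T : Y -> R) (nu : {measure set Y -> \bar R})
  (M : set (set (set W))) (Gamma : set (set W) -> set (W -> R))
  (hI : is_interval I) (hIint : interior I !=set0)
  (hT : measurable_fun setT T)
  (hucont : {within I, continuous u})
  (humono : (forall x y, I x -> I y -> x < y -> u x < u y) \/
            (forall x y, I x -> I y -> x < y -> u y < u x))
  (hA : forall g, I g ->
     (0 < \int[nu]_y (expR (u g * T y))%:E < +oo)%E)
  (hM : forall m, M m -> is_partition m)
  (hGamma : forall m, M m -> forall g, Gamma m g ->
     (forall w, I (g w)) /\ const_on_blocks m g)
  (m1 m2 : set (set W)) (hm1 : M m1) (hm2 : M m2) (n : nat)
  (hn : card_is (pjoin m1 m2) n) :
  VC_subgraph_le
    [set (fun wy : W * Y => r_fun nu u T (g2 wy.1) wy.2 / r_fun nu u T (g1 wy.1) wy.2)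
       | g1 in Gamma m1 & g2 in Gamma m2]
    (2 * n + 1).
Proof.
have [_ [_ [_ cover1]]] := hM _ hm1; have [_ [_ [_ cover2]]] := hM _ hm2.
have [kappa hkappa] := join_block_index cover1 cover2 hn.
have fibres m g : M m -> Gamma m g ->
    (forall w w', kappa w = kappa w' -> exists2 K, m K & K w /\ K w') ->
    forall w w', kappa w = kappa w' -> g w = g w'.
  by move=> hm /(hGamma m hm)[_]; exact: const_on_blocks_fibres.
(* Compare with half-spaces in R^(n+n+1), off the points with t <= 0. *)
rewrite /VC_subgraph_le mul2n -addnn.
apply: (VC_dim_le_off (N := [set z : (W * Y) * R | z.2 <= 0]) _ _
  (halfspaces_VC_dim_le (loglik_features kappa T))).
  (* every subgraph contains the points with t <= 0, as the ratio is > 0 *)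
  move=> _ [_ [g1 _ [g2 _ <-]] <-] z /= z_le0; apply: le_lt_trans z_le0 _.
  by rewrite divr_gt0 ?expR_gt0.
move=> _ [_ [g1 hg1 [g2 hg2 <-]] <-].
(* the coefficients of the log-ratio are functions of the block index *)
have g1_fac := fibres m1 g1 hm1 hg1 (fun w w' e => (hkappa w w' e).1).
have g2_fac := fibres m2 g2 hm2 hg2 (fun w w' e => (hkappa w w' e).2).
have [al hal] : exists al : 'I_n -> R,
    forall w, u (g2 w) - u (g1 w) = al (kappa w).
  by apply: factor_through => w w' /[dup] /g1_fac -> /g2_fac ->.
have [be hbe] : exists be : 'I_n -> R,
    forall w, A_fun nu u T (g1 w) - A_fun nu u T (g2 w) = be (kappa w).
  by apply: factor_through => w w' /[dup] /g1_fac -> /g2_fac ->.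
exists [set z | 0 < (loglik_features kappa T z *m loglik_coef al be) 0 0];
  first by exists (loglik_coef al be).
move=> [[w y] t] /negP; rewrite -ltNge => t_gt0.
rewrite /subgraph /= loglik_features_mul lt_expR_ratio // -hal -hbe.
by rewrite -propeqE; congr (0 < _ - _); ring.
Qed.
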